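(* Let $N\in\mathbb{N}$ be odd and either prime or divisible by at least two distinct primes. Let $b\in\mathbb{Z}$ and $f\in\mathbb{Z}[X]$ with $f(b)=N$, let $d:=\deg f$, and suppose $d$ is smaller than $q:=\max\{q'\text{ prime}:q'\mid N\}$ and $\gcd(\mathrm{lc}(f),N)=1$, where $\mathrm{lc}(f)$ is the leading coefficient of $f$. Then \[N\text{ is prime}\iff \forall x\in\{0,\dots,N-1\}:\ f(x)^{(N-1)/2}\bmod N\in\{-1,0,1\}\] (where $-1$ denotes the residue $N-1$). *)

From mathcomp Require Import all_boot all_order all_algebra.
Set Implicit Arguments. Unset Strict Implicit. Unset Printing Implicit Defensive.

(* Forward direction: for prime N this is Euler's observation that every
   (N-1)/2-th power in the field Z/N is 0 or a square root of 1.
   Backward direction: if N is composite it has a prime divisor p besides its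
   largest prime divisor q. As deg f < q and q does not divide lc f, the
   reduction of f mod q is a nonzero polynomial with fewer than q roots, so
   some residue c is not a root. By the Chinese remainder theorem choose
   x < N with x = b mod p and x = c mod q. Then f(x) = f(b) = N = 0 mod p
   while f(x) is nonzero mod q, so f(x)^((N-1)/2) mod N is divisible by p
   but not by q, hence none of 0, 1, N-1. *)

From mathcomp Require Import all_boot all_order all_algebra all_field.
Import Order.TTheory GRing.Theory Num.Theory.
Local Open Scope ring_scope.

Lemma intr_modz (R : pzRingType) (N : nat) (z : int) :
  N%:R = 0 :> R -> ((z %% N%:Z)%Z)%:~R = z%:~R :> R.
Proof.
move=> N0; have -> : (z %% N%:Z)%Z = z + (- (z %/ N%:Z)%Z) * N%:Z.
  by rewrite [in RHS](divz_eq z N) mulNr addrCA subrr addr0.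
by rewrite intrD intrM -pmulrn N0 mulr0 addr0.
Qed.

Lemma horner_intr_congr (R : nzRingType) (f : {poly int}) (x y : int) :
  x%:~R = y%:~R :> R -> (f.[x])%:~R = (f.[y])%:~R :> R.
Proof. by move=> exy; rewrite -!horner_map /= exy. Qed.

Lemma Fp_natr_eq0 p n : prime p -> (p %| n)%N -> n%:R = 0 :> 'F_p.
Proof. by move=> pp pn; apply/eqP; rewrite -(dvdn_pcharf (pchar_Fp pp)). Qed.

Lemma Fp_intr_eq0 p (z : int) : prime p -> (z%:~R == 0 :> 'F_p) = (p%:Z %| z)%Z.
Proof.
move=> pp; rewrite dvdzE /= (dvdn_pcharf (pchar_Fp pp)).
by case: z => n; rewrite ?NegzE ?mulrNz ?oppr_eq0 ?abszN /= pmulrn.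
Qed.

Lemma Fp_intr_coprime_neq0 q N (z : int) : prime q -> (q %| N)%N ->
  coprimez z N%:Z -> z%:~R != 0 :> 'F_q.
Proof.
move=> pq qN; rewrite Fp_intr_eq0 // dvdzE /= coprimezE /=; apply: contraL => qz.
by apply/negP => /(coprime_dvdl qz); rewrite prime_coprime ?qN.
Qed.

Lemma Fp_intr_small_eq p (r : int) (c : nat) : prime p ->
  0 <= r < p%:Z -> (c < p)%N -> r%:~R = c%:R :> 'F_p -> r = c%:Z.
Proof.
case: r => // m pp /andP[_]; rewrite ltz_nat => mp cp; rewrite -pmulrn.
by move/(congr1 val); rewrite /= !val_Fp_nat // !modn_small // => ->.
Qed.

Lemma expf_half_card (F : finFieldType) (x : F) : odd #|F| ->
  let y := x ^+ ((#|F| - 1) %/ 2) in y = 0 \/ y = 1 \/ y = -1.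
Proof.
move=> oddF /=; set k := ((#|F| - 1) %/ 2)%N.
have F_gt1 := card_finNzRing_gt1 F.
have k2 : (k * 2 = #|F| - 1)%N.
  by apply: divnK; rewrite subn1 -[#|F|]odd_double_half oddF /= dvdn2 odd_double.
have [->|x0] := eqVneq x 0.
  left; rewrite expr0n; case: eqP => // k0.
  by move: k2 F_gt1; rewrite k0 => /esym/eqP; rewrite subn_eq0 leqNgt => /negP.
have fermat : x ^+ (#|F| - 1) = 1.
  apply: (mulIf x0); rewrite mul1r -exprSr subn1 prednK ?expf_card //.
  exact: ltnW.
have : (x ^+ k) ^+ 2 == 1 by rewrite -exprM k2 fermat.
by rewrite sqrf_eq1 => /orP[] /eqP ->; auto.
Qed.

Lemma exists_nonroot (F : finFieldType) (g : {poly F}) :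
  g != 0 -> (size g <= #|F|)%N -> exists x, ~~ root g x.
Proof.
move=> g0 sizeg; apply/existsP; apply: contraTT sizeg.
rewrite negb_exists -ltnNge cardE => /forallP allroots.
apply: max_poly_roots g0 _ (enum_uniq _).
by apply/allP => x _; move: (allroots x); rewrite negbK.
Qed.

Lemma Fp_chinese p q (u : 'F_p) (v : 'F_q) : prime p -> prime q -> p != q ->
  exists2 x : nat, (x < p * q)%N & x%:R = u /\ x%:R = v.
Proof.
move=> pp pq pnq; have cop : coprime p q by rewrite prime_coprime // dvdn_prime2.
exists (chinese p q (val u) (val v) %% (p * q))%N.
  by rewrite ltn_pmod // muln_gt0 !prime_gt0.
split.
- rewrite -(Fp_nat_mod pp) (modn_dvdm _ (dvdn_mulr q (dvdnn p))).
  by rewrite chinese_modl // (Fp_nat_mod pp) natr_Zp.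
- rewrite -(Fp_nat_mod pq) (modn_dvdm _ (dvdn_mull p (dvdnn q))).
  by rewrite chinese_modr // (Fp_nat_mod pq) natr_Zp.
Qed.

Lemma exists_other_prime_divisor N q : (2 <= size (primes N))%N ->
  exists p, [/\ prime p, (p %| N)%N & p != q].
Proof.
have := primes_uniq N; have memP a : a \in primes N -> prime a /\ (a %| N)%N.
  by rewrite mem_primes => /and3P[].
case: (primes N) memP => [|a [|c s]] // memP /andP[] + _ _.
rewrite inE negb_or => /andP[ac _].
have [pa aN] := memP a (mem_head _ _).
have [pc cN] : prime c /\ (c %| N)%N by apply: memP; rewrite !inE eqxx orbT.
by case: (eqVneq a q) => [<-|aq]; [exists c; rewrite eq_sym | exists a].
Qed.

Lemma prime_half_power_mod N (z : int) : prime N -> odd N ->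
  let r := ((z ^+ ((N - 1) %/ 2)%N) %% N%:Z)%Z in
  r = 0 \/ r = 1 \/ r = (N - 1)%N%:Z.
Proof.
move=> pN oddN r; have N_gt0 : 0 < N%:Z by rewrite ltz_nat prime_gt0.
have r_range : 0 <= r < N%:Z by rewrite modz_ge0 ?ltz_pmod ?gt_eqF.
have r_img : r%:~R = (z%:~R : 'F_N) ^+ ((#|'F_N| - 1) %/ 2).
  by rewrite card_Fp // intr_modz ?pchar_Fp_0 // rmorphXn.
have oddF : odd #|'F_N| by rewrite card_Fp.
have N1 : (N - 1 < N)%N by rewrite subn1 ltn_predL prime_gt0.
case: (@expf_half_card _ (z%:~R : 'F_N) oddF); rewrite -r_img.
  by left; apply: (Fp_intr_small_eq N r 0 pN r_range); rewrite ?prime_gt0.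
case=> img; [right; left | right; right].
  by apply: (Fp_intr_small_eq N r 1 pN r_range); rewrite ?prime_gt1.
apply: (Fp_intr_small_eq N r _ pN r_range N1).
by rewrite img natrB ?pchar_Fp_0 ?sub0r // prime_gt0.
Qed.

Lemma composite_witness N p q (b : int) (f : {poly int}) :
  prime p -> prime q -> p != q -> (p * q %| N)%N -> (0 < N)%N ->
  f.[b] = N%:Z -> (lead_coef f)%:~R != 0 :> 'F_q -> (size f <= q)%N ->
  exists2 x : nat, (x < N)%N &
    (f.[x%:Z])%:~R = 0 :> 'F_p /\ (f.[x%:Z])%:~R != 0 :> 'F_q.
Proof.
move=> pp pq pnq pqN N_gt0 fb lcq sizef.
set fq := map_poly (intr : int -> 'F_q) f.
have [v fv] : exists v, ~~ root fq v.
  apply: exists_nonroot; last by rewrite card_Fp // size_map_poly_id0.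
  by rewrite -lead_coef_eq0 lead_coef_map_id0.
have [x xpq [xb xv]] := Fp_chinese p q (b%:~R) v pp pq pnq.
exists x; first exact: leq_trans xpq (dvdn_leq N_gt0 pqN).
split.
- rewrite (horner_intr_congr _ f _ b) -?pmulrn // fb -pmulrn Fp_natr_eq0 //.
  exact: dvdn_trans (dvdn_mulr q _) pqN.
- by rewrite -horner_map /= -pmulrn xv.
Qed.

Lemma residue_neq_0_1_pred N p q (r : int) : prime p -> (p %| N)%N ->
  (0 < N)%N -> r%:~R = 0 :> 'F_p -> r%:~R != 0 :> 'F_q ->
  ~ (r = 0 \/ r = 1 \/ r = (N - 1)%N%:Z).
Proof.
move=> pp pN N_gt0 r_p r_q.
have Np := Fp_natr_eq0 p N pp pN.
case=> [r0|[r1|rN]].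
- by move: r_q; rewrite r0 eqxx.
- by move: r_p; rewrite r1 => /eqP; rewrite oner_eq0.
- move: r_p; rewrite rN -pmulrn natrB // Np sub0r.
  by move/eqP; rewrite oppr_eq0 oner_eq0.
Qed.

Theorem corollary5p2 (N : nat) (b : int) (f : {poly int}) :
  odd N ->
  (prime N \/ (2 <= size (primes N))%N) ->
  f.[b] = N%:Z ->
  ((size f).-1 < max_pdiv N)%N ->
  coprimez (lead_coef f) N%:Z ->
  (prime N <->
   (forall x : nat, (x < N)%N ->
      let r := ((f.[x%:Z] ^+ ((N - 1) %/ 2)%N) %% N%:Z)%Z in
      r = 0 \/ r = 1 \/ r = (N - 1)%N%:Z)).
Proof.
move=> oddN hN fb hdeg hlc; split=> [pN x _|half_powers].
  exact: prime_half_power_mod.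
case: hN => // two_primes; exfalso.
have N_gt1 : (1 < N)%N by move: two_primes; case: (N) => [|[]].
have k_gt0 : (0 < (N - 1) %/ 2)%N.
  by move: oddN N_gt1; case: (N) => [|[|[|n]]] // _ _; rewrite subn1 divn_gt0.
set q := max_pdiv N in hdeg; have pq : prime q := max_pdiv_prime N_gt1.
have qN : (q %| N)%N := max_pdiv_dvd N.
have [p [pp pN pnq]] := exists_other_prime_divisor N q two_primes.
have lcq := Fp_intr_coprime_neq0 q N (lead_coef f) pq qN hlc.
have pqN : (p * q %| N)%N.
  by rewrite Gauss_dvd ?pN ?qN // prime_coprime // dvdn_prime2.
have sizef : (size f <= q)%N by move: hdeg; case: (size f).
have [x xN [fxp fxq]] :=
  composite_witness N p q b f pp pq pnq pqN (ltnW N_gt1) fb lcq sizef.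
have := half_powers x xN; set r := (_ %% _)%Z => /= r_cases.
apply: (residue_neq_0_1_pred N p q r pp pN (ltnW N_gt1)) r_cases.
- by rewrite intr_modz ?Fp_natr_eq0 // rmorphXn /= fxp expr0n gtn_eqF.
- by rewrite intr_modz ?Fp_natr_eq0 // rmorphXn expf_neq0.
Qed.
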